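(* Assume $h_0\neq0$, $h_1\neq0$ and $h_0x+h_1y>0$ for all $(x,y)\in D$. For each $(a,b)\in\{-,+\}^2$, the number $$t_{ab}=\begin{cases}1,&\text{if } 1\le\alpha_{ab}\ \text{or}\ 1\le2\beta_{ab}-\alpha_{ab},\\ 0,&\text{if } \beta_{ab}\le\alpha_{ab}\le0\ \text{or}\ \beta_{ab}<2\beta_{ab}-\alpha_{ab}\le0,\\ \alpha_{ab},&\text{if } 0<\alpha_{ab}<1,\\ 2\beta_{ab}-\alpha_{ab},&\text{if } 0<2\beta_{ab}-\alpha_{ab}<1\end{cases}$$ is a minimizer of $\varphi_{ab}$ on $[0,1]$. Moreover $$\min_{(x,y)\in D}\psi(x,y)=\min_{(a,b)\in\{-,+\}^2}\varphi_{ab}(t_{ab}).$$ If $(a^*,b^* )$ attains the latter minimum, then the point of $\partial D$ corresponding to parameter $t_{a^*b^*}$ on the side parametrized by $\varphi_{a^*b^*}$ is a minimizer of $\psi$ on $D$.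
   Context: Let $0<\mu_-<\mu_+$ and $0<\sigma_-<\sigma_+$ be real numbers, $D=[\mu_-,\mu_+]\times[\sigma_-,\sigma_+]$, and $h_0,h_1\in\mathbb R$. Write $\mu_M=(\mu_++\mu_-)/2$ and $\sigma_M=(\sigma_++\sigma_-)/2$. For $(x,y)\in D$ let $$\psi(x,y)=\frac{(h_0x+h_1y)^2}{2\mu_Mx+2\sigma_My-\mu_-\mu_+-\sigma_-\sigma_+}.$$ The four sides of $\partial D$ are parametrized by $t\in[0,1]$ through the following functions. For $a\in\{-,+\}$: - $\varphi_{-a}(t)=\psi(\mu_a,\ \sigma_-+t(\sigma_+-\sigma_-))$, the side $x=\mu_a$; - $\alpha_{-a}=-\frac{h_0\mu_a+h_1\sigma_-}{h_1(\sigma_+-\sigma_-)}$; - $\beta_{-a}=-\frac{\mu_a^2+\sigma_-^2}{\sigma_+^2-\sigma_-^2}$. For $b\in\{-,+\}$: - $\varphi_{+b}(t)=\psi(\mu_-+t(\mu_+-\mu_-),\ \sigma_b)$, the side $y=\sigma_b$; - $\alpha_{+b}=-\frac{h_0\mu_-+h_1\sigma_b}{h_0(\mu_+-\mu_-)}$; - $\beta_{+b}=-\frac{\mu_-^2+\sigma_b^2}{\mu_+^2-\mu_-^2}$. *)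

From Stdlib Require Import Reals Lra Bool.
Open Scope R_scope.
Open Scope bool_scope.

(* Signs {-,+} are encoded as bool: false = "-", true = "+". *)

(* The four sides of the boundary of D:
   Vert a  corresponds to the index "-a" (side x = mu_a),
   Horiz b corresponds to the index "+b" (side y = sigma_b). *)
Inductive side : Set := Vert (a : bool) | Horiz (b : bool).

Section Defs.
Variables (mum mup sm sp h0 h1 : R).

Definition muM : R := (mup + mum) / 2.
Definition sM : R := (sp + sm) / 2.

Definition mu (a : bool) : R := if a then mup else mum.
Definition sg (b : bool) : R := if b then sp else sm.

Definition inD (x y : R) : Prop := mum <= x <= mup /\ sm <= y <= sp.

Definition psi (x y : R) : R :=
  (h0 * x + h1 * y) ^ 2 / (2 * muM * x + 2 * sM * y - mum * mup - sm * sp).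

Definition bpoint (k : side) (t : R) : R * R :=
  match k with
  | Vert a => (mu a, sm + t * (sp - sm))
  | Horiz b => (mum + t * (mup - mum), sg b)
  end.

Definition phi (k : side) (t : R) : R := psi (fst (bpoint k t)) (snd (bpoint k t)).

Definition alpha (k : side) : R :=
  match k with
  | Vert a => - (h0 * mu a + h1 * sm) / (h1 * (sp - sm))
  | Horiz b => - (h0 * mum + h1 * sg b) / (h0 * (mup - mum))
  end.

Definition beta (k : side) : R :=
  match k with
  | Vert a => - (mu a ^ 2 + sm ^ 2) / (sp ^ 2 - sm ^ 2)
  | Horiz b => - (mum ^ 2 + sg b ^ 2) / (mup ^ 2 - mum ^ 2)
  end.

Definition Rleb (x y : R) : bool := if Rle_dec x y then true else false.
Definition Rltb (x y : R) : bool := if Rlt_dec x y then true else false.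

(* The case-defined number t_{ab}; the cases are tested in the order of the
   paper (for the actual alpha, beta they are exhaustive and consistent,
   since beta < 0), the last case being the remaining one. *)
Definition tcase (al be : R) : R :=
  if Rleb 1 al || Rleb 1 (2 * be - al) then 1
  else if (Rleb be al && Rleb al 0) || (Rltb be (2 * be - al) && Rleb (2 * be - al) 0) then 0
  else if Rltb 0 al && Rltb al 1 then al
  else 2 * be - al.

Definition tab (k : side) : R := tcase (alpha k) (beta k).

Definition minval : R :=
  Rmin (Rmin (phi (Vert false) (tab (Vert false))) (phi (Vert true) (tab (Vert true))))
       (Rmin (phi (Horiz false) (tab (Horiz false))) (phi (Horiz true) (tab (Horiz true)))).

End Defs.

From Stdlib Require Import Reals Lra Psatz.
Open Scope R_scope.

(* Minimizing psi(x,y) = L(x,y)^2 / Q(x,y) over the rectangle D, where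
   L = h0 x + h1 y > 0 and Q = 2 muM x + 2 sM y - mu- mu+ - sigma- sigma+ are
   affine (Q > 0 on D).

   For be < 0 the function
      g(t) = (t - al)^2 / (t - be) = u + d^2/u - 2(al - be)  (u = t - be,
      d = |al - be|) is convex on t > be with vertex be + d; hence its
      minimizer on [0,1] is the clamp of be + d to [0,1], and the case
      definition t_ab (tcase) is exactly this clamp.
   2. Sides.  On each side of D, L and Q are affine in the parameter t,
      vanishing at alpha_k and beta_k < 0, so phi_k is a positive multiple
      of g with (al, be) = (alpha_k, beta_k): t_k minimizes phi_k.
   3. Reduction to the boundary.  Through any point of D, the ratio L/Q is
      constant along a line; moving along it where L decreases lowers
      psi = L * (L/Q) until the line leaves D.  So every value of psi on D is
      bounded below by a value on the boundary, hence by the minimum of the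
      four side minima, which is attained at a boundary point. *)

Lemma div_le_div_cross (a b c d : R) :
  0 < b -> 0 < d -> a * d <= c * b -> a / b <= c / d.
Proof.
  intros Hb Hd Hcross.
  replace (a / b) with (a * d * / (b * d)) by (field; lra).
  replace (c / d) with (c * b * / (b * d)) by (field; lra).
  apply Rmult_le_compat_r; [left; apply Rinv_0_lt_compat; nra | exact Hcross].
Qed.

Lemma div_nonneg (a b : R) : 0 <= a -> 0 < b -> 0 <= a / b.
Proof. intros Ha Hb. apply Rmult_le_pos; [exact Ha | left; apply Rinv_0_lt_compat, Hb]. Qed.

(* Comparison of the profile g(t) = (t - al)^2 / (t - be) at two points
   right of the pole: g(s) - g(t) has the sign of
   (s - t) ((s - be)(t - be) - (al - be)^2). *)
Lemma profile_le (al be t s : R) :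
  be < t -> be < s ->
  0 <= (s - t) * ((s - be) * (t - be) - (al - be) ^ 2) ->
  (t - al) ^ 2 / (t - be) <= (s - al) ^ 2 / (s - be).
Proof.
  intros Ht Hs Hkey. apply div_le_div_cross; [lra | lra |].
  assert (Hid : (s - al) ^ 2 * (t - be) - (t - al) ^ 2 * (s - be)
                = (s - t) * ((s - be) * (t - be) - (al - be) ^ 2)) by ring.
  lra.
Qed.

Definition clamp01 (v : R) : R := Rmax 0 (Rmin 1 v).

Lemma clamp01_cases (v : R) :
  (clamp01 v = 1 /\ 1 <= v) \/ (clamp01 v = 0 /\ v <= 0) \/
  (clamp01 v = v /\ 0 <= v <= 1).
Proof.
  unfold clamp01, Rmax, Rmin. destruct (Rle_dec 1 v);
  repeat match goal with |- context [Rle_dec ?a ?b] => destruct (Rle_dec a b) end;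
    first [left; lra | right; left; lra | right; right; lra].
Qed.

(* For be < 0, the case definition t_ab is the projection onto [0,1] of the
   vertex be + |al - be| of the profile (one of al, 2 be - al is this vertex,
   the other one lies left of be < 0). *)
Lemma tcase_clamp (al be : R) :
  be < 0 -> tcase al be = clamp01 (be + Rabs (al - be)).
Proof.
  intros Hbe.
  destruct (clamp01_cases (be + Rabs (al - be))) as [[Hc Hv] | [[Hc Hv] | [Hc Hv]]];
    rewrite Hc; unfold Rabs in *; destruct (Rcase_abs (al - be));
    unfold tcase, Rleb, Rltb;
    repeat match goal with
           | |- context [Rle_dec ?a ?b] => destruct (Rle_dec a b)
           | |- context [Rlt_dec ?a ?b] => destruct (Rlt_dec a b)
           end; cbn [orb andb]; lra.
Qed.

(* t_ab minimizes the profile on [0,1]: the profile decreases left of the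
   vertex and increases right of it. *)
Lemma tcase_minimizes_profile (al be s : R) :
  be < 0 -> 0 <= s <= 1 ->
  (tcase al be - al) ^ 2 / (tcase al be - be) <= (s - al) ^ 2 / (s - be).
Proof.
  intros Hbe Hs. rewrite (tcase_clamp al be Hbe).
  assert (Hd2 : Rabs (al - be) ^ 2 = (al - be) ^ 2) by apply pow2_abs.
  assert (Hd0 : 0 <= Rabs (al - be)) by apply Rabs_pos.
  set (d := Rabs (al - be)) in *.
  destruct (clamp01_cases (be + d)) as [[Hc Hv] | [[Hc Hv] | [Hc Hv]]];
    rewrite Hc; apply profile_le; try lra; rewrite <- Hd2.
  - (* the vertex lies right of 1: the profile decreases on [0,1] *)
    assert (Hd : (1 - be) * (1 - be) <= d ^ 2) by nra.
    replace ((s - 1) * ((s - be) * (1 - be) - d ^ 2))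
      with ((1 - s) * (d ^ 2 - (s - be) * (1 - be))) by ring.
    apply Rmult_le_pos; nra.
  - (* the vertex lies left of 0: the profile increases on [0,1] *)
    assert (Hd : d ^ 2 <= be * be) by nra.
    apply Rmult_le_pos; nra.
  - (* interior vertex: the key quantity equals d (s - c)^2 *)
    replace ((s - (be + d)) * ((s - be) * (be + d - be) - d ^ 2))
      with (d * ((s - (be + d)) * (s - (be + d)))) by ring.
    apply Rmult_le_pos; [exact Hd0 | apply Rle_0_sqr].
Qed.

Lemma tcase_in_unit (al be : R) : be < 0 -> 0 <= tcase al be <= 1.
Proof.
  intros Hbe. rewrite (tcase_clamp al be Hbe).
  destruct (clamp01_cases (be + Rabs (al - be))) as [[Hc _] | [[Hc _] | [Hc Hv]]];
    rewrite Hc; lra.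
Qed.

Lemma ray_exits_interval (a1 a2 x e : R) :
  a1 <= x <= a2 -> e <> 0 ->
  exists tau, 0 <= tau /\ (x + tau * e = a1 \/ x + tau * e = a2) /\
    forall t, 0 <= t <= tau -> a1 <= x + t * e <= a2.
Proof.
  intros Hx He. destruct (Rlt_or_le 0 e) as [Hpos | Hneg].
  - exists ((a2 - x) / e).
    assert (Hend : (a2 - x) / e * e = a2 - x) by (field; lra).
    split; [apply div_nonneg; lra |]. split; [right; lra |].
    intros t Ht. assert (t * e <= (a2 - x) / e * e) by (apply Rmult_le_compat_r; lra).
    nra.
  - exists ((x - a1) / - e).
    assert (Hend : (x - a1) / - e * e = a1 - x) by (field; lra).
    split; [apply div_nonneg; lra |]. split; [left; lra |].
    intros t Ht. assert (t * - e <= (x - a1) / - e * - e) by (apply Rmult_le_compat_r; lra).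
    nra.
Qed.

Lemma ray_exits_box (a1 a2 b1 b2 x y e1 e2 : R) :
  a1 <= x <= a2 -> b1 <= y <= b2 -> (e1 <> 0 \/ e2 <> 0) ->
  exists t, 0 <= t /\ a1 <= x + t * e1 <= a2 /\ b1 <= y + t * e2 <= b2 /\
    (x + t * e1 = a1 \/ x + t * e1 = a2 \/ y + t * e2 = b1 \/ y + t * e2 = b2).
Proof.
  intros Hx Hy He.
  destruct (Req_dec e1 0) as [E1 | E1]; destruct (Req_dec e2 0) as [E2 | E2].
  - exfalso; tauto.
  - destruct (ray_exits_interval b1 b2 y e2 Hy E2) as [tau [Ht [Hend Hin]]].
    exists tau. subst e1. rewrite Rmult_0_r, Rplus_0_r.
    specialize (Hin tau ltac:(lra)). tauto.
  - destruct (ray_exits_interval a1 a2 x e1 Hx E1) as [tau [Ht [Hend Hin]]].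
    exists tau. subst e2. rewrite Rmult_0_r, Rplus_0_r.
    specialize (Hin tau ltac:(lra)). tauto.
  - destruct (ray_exits_interval a1 a2 x e1 Hx E1) as [t1 [Ht1 [Hend1 Hin1]]].
    destruct (ray_exits_interval b1 b2 y e2 Hy E2) as [t2 [Ht2 [Hend2 Hin2]]].
    (* the ray leaves the box at the first of the two exit times *)
    destruct (Rle_dec t1 t2).
    + exists t1. specialize (Hin1 t1 ltac:(lra)). specialize (Hin2 t1 ltac:(lra)). tauto.
    + exists t2. specialize (Hin1 t2 ltac:(lra)). specialize (Hin2 t2 ltac:(lra)). tauto.
Qed.

(* If two points have the same ratio L/Q (with Q > 0) and the first has the
   smaller positive L, then it also has the smaller L^2/Q = L * (L/Q). *)
Lemma square_ratio_le (L0 Q0 L1 Q1 : R) :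
  0 < Q0 -> 0 < Q1 -> 0 < L1 <= L0 -> L1 * Q0 = L0 * Q1 ->
  L1 ^ 2 / Q1 <= L0 ^ 2 / Q0.
Proof.
  intros HQ0 HQ1 HL Hsame. apply div_le_div_cross; [exact HQ1 | exact HQ0 |].
  replace (L1 ^ 2 * Q0) with (L1 * (L0 * Q1)) by (rewrite <- Hsame; ring).
  assert (0 < L0 * Q1) by nra. nra.
Qed.

Section Rectangle.

Variables mum mup sm sp h0 h1 : R.
Hypothesis Hmu : 0 < mum < mup.
Hypothesis Hsig : 0 < sm < sp.

Local Notation inBox := (inD mum mup sm sp).
Local Notation Psi := (psi mum mup sm sp h0 h1).
Local Notation Phi := (phi mum mup sm sp h0 h1).
Local Notation Tab := (tab mum mup sm sp h0 h1).
Local Notation Bpoint := (bpoint mum mup sm sp).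
Local Notation Minval := (minval mum mup sm sp h0 h1).

Definition lin (x y : R) : R := h0 * x + h1 * y.
Definition den (x y : R) : R :=
  2 * muM mum mup * x + 2 * sM sm sp * y - mum * mup - sm * sp.

(* The denominator is positive on D: it is increasing in x and y and equals
   mu-^2 + sigma-^2 > 0 at the lower-left corner. *)
Lemma den_pos (x y : R) : inBox x y -> 0 < den x y.
Proof.
  intros [Hx Hy]. unfold den, muM, sM.
  assert (0 <= (mup + mum) * (x - mum)) by nra.
  assert (0 <= (sp + sm) * (y - sm)) by nra. nra.
Qed.

Lemma bpoint_inD (k : side) (t : R) :
  0 <= t <= 1 -> inBox (fst (Bpoint k t)) (snd (Bpoint k t)).
Proof.
  intros Ht. destruct k as [[|] | [|]]; unfold inD, bpoint, mu, sg; cbn [fst snd];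
    split; split; nra.
Qed.

Lemma beta_neg (k : side) : beta mum mup sm sp k < 0.
Proof.
  assert (Hneg : forall p q, 0 < p -> 0 < q -> - p / q < 0).
  { intros p q Hp Hq. unfold Rdiv. rewrite <- Ropp_mult_distr_l.
    apply Ropp_lt_gt_0_contravar. apply Rdiv_lt_0_compat; assumption. }
  destruct k as [[|] | [|]]; unfold beta, mu, sg; apply Hneg; nra.
Qed.

Hypothesis Hh0 : h0 <> 0.
Hypothesis Hh1 : h1 <> 0.

Lemma side_affine (k : side) :
  exists c1 c2, 0 < c2 /\ forall t,
    lin (fst (Bpoint k t)) (snd (Bpoint k t)) = c1 * (t - alpha mum mup sm sp h0 h1 k) /\
    den (fst (Bpoint k t)) (snd (Bpoint k t)) = c2 * (t - beta mum mup sm sp k).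
Proof.
  destruct k as [a | b].
  - exists (h1 * (sp - sm)), (sp ^ 2 - sm ^ 2). split; [nra |]. intros t.
    unfold lin, den, bpoint, alpha, beta, muM, sM, mu; cbn [fst snd].
    split; destruct a; field; repeat split; nra.
  - exists (h0 * (mup - mum)), (mup ^ 2 - mum ^ 2). split; [nra |]. intros t.
    unfold lin, den, bpoint, alpha, beta, muM, sM, sg; cbn [fst snd].
    split; destruct b; field; repeat split; nra.
Qed.

(* First claim: t_k minimizes phi_k on [0,1], because phi_k is a positive
   multiple of the profile (t - alpha_k)^2 / (t - beta_k). *)
Lemma tab_minimizes_phi (k : side) :
  0 <= Tab k <= 1 /\ forall s, 0 <= s <= 1 -> Phi k (Tab k) <= Phi k s.
Proof.
  pose proof (beta_neg k) as Hbe.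
  destruct (side_affine k) as [c1 [c2 [Hc2 Hform]]].
  set (al := alpha mum mup sm sp h0 h1 k) in *. set (be := beta mum mup sm sp k) in *.
  assert (Hprofile : forall t, be < t ->
            Phi k t = c1 ^ 2 / c2 * ((t - al) ^ 2 / (t - be))).
  { intros t Ht. unfold phi, psi. destruct (Hform t) as [Hl Hq].
    unfold lin, den in Hl, Hq. rewrite Hl, Hq. field; lra. }
  pose proof (tcase_in_unit al be Hbe) as Hunit.
  split; [exact Hunit |]. intros s Hs.
  unfold tab; fold al be. rewrite !Hprofile by lra.
  apply Rmult_le_compat_l; [| exact (tcase_minimizes_profile al be s Hbe Hs)].
  apply div_nonneg; nra.
Qed.

Definition onBoundary (x y : R) : Prop := x = mum \/ x = mup \/ y = sm \/ y = sp.

Hypothesis Hpos : forall x y, inBox x y -> 0 < lin x y.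

(* Direction of the line through (x,y) on which the ratio lin/den is
   constant (the level line of lin/den through (x,y)). *)
Definition level_dir (x y : R) : R * R :=
  (h1 * den x y - 2 * sM sm sp * lin x y,
   - (h0 * den x y - 2 * muM mum mup * lin x y)).

(* Rate at which lin changes along level_dir, relative to lin itself. *)
Definition kappa : R := h0 * sM sm sp - h1 * muM mum mup.

(* The level direction is nonzero: its inner product with (x,y) is
   -(mu- mu+ + sigma- sigma+) lin(x,y) < 0. *)
Lemma level_dir_nonzero (x y : R) :
  inBox x y -> fst (level_dir x y) <> 0 \/ snd (level_dir x y) <> 0.
Proof.
  intros HD. pose proof (Hpos x y HD) as HL.
  assert (Hid : x * snd (level_dir x y) - y * fst (level_dir x y)
                = (mum * mup + sm * sp) * lin x y)
    by (unfold level_dir, lin, den; cbn [fst snd]; ring).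
  assert (0 < (mum * mup + sm * sp) * lin x y) by (apply Rmult_lt_0_compat; nra).
  destruct (Req_dec (fst (level_dir x y)) 0) as [E1 | E1]; [| left; exact E1].
  right; intro E2. rewrite E1, E2 in Hid. lra.
Qed.

(* Moving from (x,y) along the level line in a direction where lin does not
   increase, psi = lin * (lin/den) does not increase, as long as we stay in D. *)
Lemma psi_le_along_level_dir (x y c : R) :
  inBox x y -> 0 <= c * kappa ->
  inBox (x + c * fst (level_dir x y)) (y + c * snd (level_dir x y)) ->
  Psi (x + c * fst (level_dir x y)) (y + c * snd (level_dir x y)) <= Psi x y.
Proof.
  intros HD Hc HD'.
  assert (Hsame : lin (x + c * fst (level_dir x y)) (y + c * snd (level_dir x y)) * den x y
                  = lin x y * den (x + c * fst (level_dir x y)) (y + c * snd (level_dir x y)))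
    by (unfold level_dir, lin, den; cbn [fst snd]; ring).
  assert (Hdecr : lin (x + c * fst (level_dir x y)) (y + c * snd (level_dir x y))
                  = lin x y * (1 - 2 * (c * kappa)))
    by (unfold level_dir, kappa, lin, den; cbn [fst snd]; ring).
  pose proof (Hpos _ _ HD) as HL0. pose proof (Hpos _ _ HD') as HL1.
  apply (square_ratio_le (lin x y) (den x y)); try apply den_pos; try assumption.
  split; [exact HL1 | unfold lin in *; nra].
Qed.

(* Reduction to the boundary: following the level line from (x,y) in the
   direction where lin decreases until it meets the boundary of D. *)
Lemma level_line_to_boundary (x y : R) :
  inBox x y ->
  exists x' y', inBox x' y' /\ onBoundary x' y' /\ Psi x' y' <= Psi x y.
Proof.
  intros HD.
  assert (Hsgn : exists sgn, sgn <> 0 /\ 0 <= sgn * kappa).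
  { destruct (Rle_dec 0 kappa); [exists 1 | exists (-1)]; split; lra. }
  destruct Hsgn as [sgn [Hsgn Hsk]].
  set (e1 := fst (level_dir x y)) in *. set (e2 := snd (level_dir x y)) in *.
  assert (Hdir : sgn * e1 <> 0 \/ sgn * e2 <> 0).
  { destruct (level_dir_nonzero x y HD); [left | right]; intro E;
      apply Rmult_integral in E; tauto. }
  destruct HD as [Hx Hy].
  destruct (ray_exits_box mum mup sm sp x y (sgn * e1) (sgn * e2) Hx Hy Hdir)
    as [t [Ht [Hx' [Hy' Hbd]]]].
  exists (x + t * (sgn * e1)), (y + t * (sgn * e2)).
  split; [split; assumption | split; [exact Hbd |]].
  replace (t * (sgn * e1)) with (t * sgn * e1) in * by ring.
  replace (t * (sgn * e2)) with (t * sgn * e2) in * by ring.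
  apply (psi_le_along_level_dir x y (t * sgn)); [split; assumption | | split; assumption].
  rewrite Rmult_assoc. apply Rmult_le_pos; assumption.
Qed.

Lemma boundary_point_on_side (x y : R) :
  inBox x y -> onBoundary x y ->
  exists k s, 0 <= s <= 1 /\ Bpoint k s = (x, y).
Proof.
  intros [Hx Hy] Hbd.
  assert (Hsy : 0 <= (y - sm) / (sp - sm) <= 1).
  { split; [apply div_nonneg; lra |].
    apply (Rmult_le_reg_r (sp - sm)); [lra |]. field_simplify; lra. }
  assert (Hsx : 0 <= (x - mum) / (mup - mum) <= 1).
  { split; [apply div_nonneg; lra |].
    apply (Rmult_le_reg_r (mup - mum)); [lra |]. field_simplify; lra. }
  destruct Hbd as [E | [E | [E | E]]]; subst.
  - exists (Vert false), ((y - sm) / (sp - sm)). split; [exact Hsy |].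
    unfold bpoint, mu. f_equal. field; lra.
  - exists (Vert true), ((y - sm) / (sp - sm)). split; [exact Hsy |].
    unfold bpoint, mu. f_equal. field; lra.
  - exists (Horiz false), ((x - mum) / (mup - mum)). split; [exact Hsx |].
    unfold bpoint, sg. f_equal. field; lra.
  - exists (Horiz true), ((x - mum) / (mup - mum)). split; [exact Hsx |].
    unfold bpoint, sg. f_equal. field; lra.
Qed.

Lemma minval_le_side (k : side) : Minval <= Phi k (Tab k).
Proof.
  unfold minval. destruct k as [[|] | [|]].
  - eapply Rle_trans; [apply Rmin_l | apply Rmin_r].
  - eapply Rle_trans; [apply Rmin_l | apply Rmin_l].
  - eapply Rle_trans; [apply Rmin_r | apply Rmin_r].
  - eapply Rle_trans; [apply Rmin_r | apply Rmin_l].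
Qed.

(* Second claim, lower bound: psi >= minval on D.  Reduce to a boundary
   point, which lies on some side k where phi_k is minimized at t_k. *)
Lemma minval_le_psi (x y : R) : inBox x y -> Minval <= Psi x y.
Proof.
  intros HD.
  destruct (level_line_to_boundary x y HD) as [x' [y' [HD' [Hbd Hle]]]].
  destruct (boundary_point_on_side x' y' HD' Hbd) as [k [s [Hs Hpt]]].
  apply (Rle_trans _ (Phi k (Tab k))); [apply minval_le_side |].
  apply (Rle_trans _ (Phi k s)); [apply (proj2 (tab_minimizes_phi k)), Hs |].
  unfold phi. rewrite Hpt. exact Hle.
Qed.

End Rectangle.

Lemma Rmin4_cases (a b c d : R) :
  let m := Rmin (Rmin a b) (Rmin c d) in m = a \/ m = b \/ m = c \/ m = d.
Proof.
  unfold Rmin. destruct (Rle_dec a b); destruct (Rle_dec c d);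
    match goal with |- context [Rle_dec ?u ?v] => destruct (Rle_dec u v) end; tauto.
Qed.

Lemma minval_attained (mum mup sm sp h0 h1 : R) :
  exists k, phi mum mup sm sp h0 h1 k (tab mum mup sm sp h0 h1 k)
            = minval mum mup sm sp h0 h1.
Proof.
  unfold minval.
  destruct (Rmin4_cases
    (phi mum mup sm sp h0 h1 (Vert false) (tab mum mup sm sp h0 h1 (Vert false)))
    (phi mum mup sm sp h0 h1 (Vert true) (tab mum mup sm sp h0 h1 (Vert true)))
    (phi mum mup sm sp h0 h1 (Horiz false) (tab mum mup sm sp h0 h1 (Horiz false)))
    (phi mum mup sm sp h0 h1 (Horiz true) (tab mum mup sm sp h0 h1 (Horiz true))))
    as [E | [E | [E | E]]]; rewrite E; eexists; reflexivity.
Qed.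

Theorem mainTheorem6 (mum mup sm sp h0 h1 : R)
  (Hmu : 0 < mum < mup) (Hsig : 0 < sm < sp)
  (Hh0 : h0 <> 0) (Hh1 : h1 <> 0)
  (Hpos : forall x y, inD mum mup sm sp x y -> 0 < h0 * x + h1 * y) :
  (* each t_{ab} minimizes phi_{ab} on [0,1] *)
  (forall k : side,
     0 <= tab mum mup sm sp h0 h1 k <= 1 /\
     forall s, 0 <= s <= 1 ->
       phi mum mup sm sp h0 h1 k (tab mum mup sm sp h0 h1 k)
       <= phi mum mup sm sp h0 h1 k s) /\
  (* min over D of psi equals the minimum of the four values *)
  ((forall x y, inD mum mup sm sp x y ->
      minval mum mup sm sp h0 h1 <= psi mum mup sm sp h0 h1 x y) /\
   (exists x y, inD mum mup sm sp x y /\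
      psi mum mup sm sp h0 h1 x y = minval mum mup sm sp h0 h1)) /\
  (* a side attaining the minimum yields a minimizer of psi on D *)
  (forall k : side,
     phi mum mup sm sp h0 h1 k (tab mum mup sm sp h0 h1 k) = minval mum mup sm sp h0 h1 ->
     let p := bpoint mum mup sm sp k (tab mum mup sm sp h0 h1 k) in
     inD mum mup sm sp (fst p) (snd p) /\
     forall x y, inD mum mup sm sp x y ->
       psi mum mup sm sp h0 h1 (fst p) (snd p) <= psi mum mup sm sp h0 h1 x y).
Proof.
  pose proof (tab_minimizes_phi mum mup sm sp h0 h1 Hmu Hsig Hh0 Hh1) as Hside.
  pose proof (minval_le_psi mum mup sm sp h0 h1 Hmu Hsig Hh0 Hh1 Hpos) as Hlower.
  assert (Hopt : forall k,
            phi mum mup sm sp h0 h1 k (tab mum mup sm sp h0 h1 k) = minval mum mup sm sp h0 h1 ->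
            let p := bpoint mum mup sm sp k (tab mum mup sm sp h0 h1 k) in
            inD mum mup sm sp (fst p) (snd p) /\
            psi mum mup sm sp h0 h1 (fst p) (snd p) = minval mum mup sm sp h0 h1).
  { intros k Hk p. split; [apply (bpoint_inD mum mup sm sp Hmu Hsig), Hside |].
    exact Hk. }
  split; [exact Hside |]. split; [split; [exact Hlower |] |].
  - destruct (minval_attained mum mup sm sp h0 h1) as [k Hk].
    destruct (Hopt k Hk) as [HD Hval]. eexists; eexists; split; [exact HD | exact Hval].
  - intros k Hk p. destruct (Hopt k Hk) as [HD Hval].
    split; [exact HD |]. intros x y Hxy. fold p in Hval. rewrite Hval. exact (Hlower x y Hxy).
Qed.
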